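(* Let $\mathbb{K}$ be a non-Archimedean valued field and $G$ a compactly generated topological group. Then for every normed $\mathbb{K}[G]$-module $E$, the comparison map $c^2 : H^2_{cb}(G, E) \to H^2_c(G, E)$ is injective.
   Context: A non-Archimedean valued field is a field with an absolute value satisfying the ultrametric inequality. A normed $\mathbb{K}[G]$-module is a $\mathbb{K}$-vector space with an ultrametric norm ($\|x\|=0$ iff $x=0$, $\|x+y\|\le\max$, $\|\alpha x\|=|\alpha|_\mathbb{K}\|x\|$) on which $G$ acts by linear isometries. Bar resolution: $\overline{C}^0(G,E)=\overline{C}^0_b(G,E)=E$, and for $n\ge1$, $\overline{C}^n(G,E)$ is the space of continuous maps $G^n\to E$ and $\overline{C}^n_b(G,E)$ its subspace of bounded ones; coboundary $\delta^0v(g)=g\cdot v-v$ and $\delta^nf(g_1,\dots,g_{n+1})=g_1\cdot f(g_2,\dots,g_{n+1})+\sum_{i=1}^n(-1)^if(g_1,\dots,g_ig_{i+1},\dots,g_{n+1})+(-1)^{n+1}f(g_1,\dots,g_n)$. $H^\bullet_c(G,E)$ and $H^\bullet_{cb}(G,E)$ are the cohomologies of these complexes, and the comparison map $c^\bullet$ is induced by the inclusion $\overline{C}^\bullet_b\subset\overline{C}^\bullet$. *)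

From HB Require Import structures.
From mathcomp Require Import all_boot all_order all_algebra.
From mathcomp Require Import all_classical all_reals topology.
Set Implicit Arguments. Unset Strict Implicit. Unset Printing Implicit Defensive.
Import Order.TTheory GRing.Theory Num.Theory.
Local Open Scope classical_set_scope.
Local Open Scope ring_scope.

Record nonarch_abs (R : realType) (K : fieldType) (absK : K -> R) : Prop := {
  abs_ge0 : forall x, 0 <= absK x;
  abs_eq0 : forall x, absK x = 0 <-> x = 0;
  abs_mul : forall x y, absK (x * y) = absK x * absK y;
  abs_ultra : forall x y, absK (x + y) <= Num.max (absK x) (absK y) }.

Record is_topgroup (G : topologicalType) (mul : G -> G -> G) (inv : G -> G)
    (one : G) : Prop := {
  tg_assoc : forall x y z, mul x (mul y z) = mul (mul x y) z;
  tg_mul1g : forall x, mul one x = x;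
  tg_mulg1 : forall x, mul x one = x;
  tg_mulVg : forall x, mul (inv x) x = one;
  tg_mulgV : forall x, mul x (inv x) = one;
  tg_mul_cont : continuous (fun p : G * G => mul p.1 p.2);
  tg_inv_cont : continuous inv }.

Definition is_subgroup (G : Type) (mul : G -> G -> G) (inv : G -> G) (one : G)
    (S : set G) : Prop :=
  S one /\ (forall x y, S x -> S y -> S (mul x y)) /\ (forall x, S x -> S (inv x)).

Definition generated (G : Type) (mul : G -> G -> G) (inv : G -> G) (one : G)
    (A : set G) : set G :=
  fun x => forall S, is_subgroup mul inv one S -> A `<=` S -> S x.

Definition compactly_generated (G : topologicalType) (mul : G -> G -> G)
    (inv : G -> G) (one : G) : Prop :=
  exists A : set G, compact A /\ generated mul inv one A = setT.

Record normed_KG_module (R : realType) (K : fieldType) (absK : K -> R)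
    (G : Type) (mul : G -> G -> G) (one : G)
    (E : lmodType K) (nE : E -> R) (act : G -> E -> E) : Prop := {
  norm_eq0 : forall x, nE x = 0 <-> x = 0;
  norm_ultra : forall x y, nE (x + y) <= Num.max (nE x) (nE y);
  norm_scale : forall (a : K) x, nE (a *: x) = absK a * nE x;
  act_add : forall g x y, act g (x + y) = act g x + act g y;
  act_scale : forall g (a : K) x, act g (a *: x) = a *: act g x;
  act_isom : forall g x, nE (act g x) = nE x;
  act_one : forall x, act one x = x;
  act_mul : forall g h x, act (mul g h) x = act g (act h x) }.

Definition ncontinuous (R : realType) (T : topologicalType) (E : zmodType)
    (nE : E -> R) (f : T -> E) : Prop :=
  forall x (eps : R), 0 < eps -> \forall y \near x, nE (f y - f x) < eps.

Definition nbounded (R : realType) (T : Type) (E : zmodType) (nE : E -> R)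
    (f : T -> E) : Prop := exists M : R, forall x, nE (f x) <= M.

(* Coboundaries of the inhomogeneous bar resolution in degrees 1 and 2. *)
Definition delta1 (G : Type) (E : zmodType) (mul : G -> G -> G)
    (act : G -> E -> E) (f : G -> E) : G * G -> E :=
  fun p => act p.1 (f p.2) - f (mul p.1 p.2) + f p.1.

Definition delta2 (G : Type) (E : zmodType) (mul : G -> G -> G)
    (act : G -> E -> E) (f : G * G -> E) : G * G * G -> E :=
  fun t => let: (g1, g2, g3) := t in
    act g1 (f (g2, g3)) - f (mul g1 g2, g3) + f (g1, mul g2 g3) - f (g1, g2).

Definition bcocycle2 (R : realType) (G : topologicalType) (E : zmodType)
    (nE : E -> R) (mul : G -> G -> G) (act : G -> E -> E) (f : G * G -> E) :=
  ncontinuous nE f /\ nbounded nE f /\ (forall t, delta2 mul act f t = 0).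

Definition c_coboundary2 (R : realType) (G : topologicalType) (E : zmodType)
    (nE : E -> R) (mul : G -> G -> G) (act : G -> E -> E) (f : G * G -> E) :=
  exists h : G -> E, ncontinuous nE h /\ forall p, f p = delta1 mul act h p.

Definition cb_coboundary2 (R : realType) (G : topologicalType) (E : zmodType)
    (nE : E -> R) (mul : G -> G -> G) (act : G -> E -> E) (f : G * G -> E) :=
  exists h : G -> E, ncontinuous nE h /\ nbounded nE h /\
    forall p, f p = delta1 mul act h p.

(* Injectivity of c^2 : H^2_cb -> H^2_c, [f]_cb |-> [f]_c, expressed on
   representatives: two bounded cocycles with the same image in H^2_c
   (difference in B^2_c) have the same class in H^2_cb (difference in B^2_cb). *)
Definition comparison2_injective (R : realType) (G : topologicalType)
    (E : zmodType) (nE : E -> R) (mul : G -> G -> G) (act : G -> E -> E) :=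
  forall f1 f2 : G * G -> E,
    bcocycle2 nE mul act f1 -> bcocycle2 nE mul act f2 ->
    c_coboundary2 nE mul act (fun p => f1 p - f2 p) ->
    cb_coboundary2 nE mul act (fun p => f1 p - f2 p).

(** If [f1 - f2 = delta1 h] with [h] continuous, then [delta1 h] is bounded
    by some [D].  Since [h (x y) = x.h y + h x - delta1 h (x, y)] and
    [x.h (x^-1) = delta1 h (x, x^-1) + h 1 - h x], the ultrametric inequality
    makes every sublevel set [{x | |h x| <= M}] with [M >= D] a subgroup.
    Taking [M] above the bound of [h] on a compact generating set, this
    subgroup is all of [G], so [h] is bounded. *)
From HB Require Import structures.
From mathcomp Require Import all_boot all_order all_algebra.
From mathcomp Require Import all_classical all_reals topology.
From mathcomp Require Import normedtype lra.
Set Implicit Arguments. Unset Strict Implicit. Unset Printing Implicit Defensive.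
Import Order.TTheory GRing.Theory Num.Theory.
Local Open Scope classical_set_scope.
Local Open Scope ring_scope.

Section NonArchimedeanAbs.
Variables (R : realType) (K : fieldType) (absK : K -> R).
Hypothesis hK : nonarch_abs absK.

Lemma nonarch_abs1 : absK 1 = 1.
Proof.
have abs11 := abs_mul hK 1 1; rewrite mulr1 in abs11.
have abs1_neq0 : absK 1 != 0.
  by apply/eqP => /(abs_eq0 hK)/eqP; rewrite oner_eq0.
apply/eqP; rewrite -subr_eq0; apply/eqP/(mulfI abs1_neq0).
by rewrite mulrBr mulr1 -abs11 subrr mulr0.
Qed.

Lemma nonarch_absN1 : absK (-1) = 1.
Proof.
have := abs_mul hK (-1) (-1); rewrite mulrNN mulr1 nonarch_abs1.
have := abs_ge0 hK (-1); nra.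
Qed.

End NonArchimedeanAbs.

Section NormedModule.
Variables (R : realType) (K : fieldType) (absK : K -> R) (G : Type).
Variables (mul : G -> G -> G) (one : G) (E : lmodType K) (nE : E -> R).
Variable (act : G -> E -> E).
Hypotheses (hK : nonarch_abs absK) (hE : normed_KG_module absK mul one nE act).

Lemma normN (x : E) : nE (- x) = nE x.
Proof. by rewrite -scaleN1r (norm_scale hE) (nonarch_absN1 hK) mul1r. Qed.

Lemma norm_ultraB (x y : E) : nE (x - y) <= Num.max (nE x) (nE y).
Proof. by rewrite -(normN y); apply: (norm_ultra hE). Qed.

End NormedModule.

Lemma ncontinuous_bounded_compact (R : realType) (T : topologicalType)
    (E : zmodType) (nE : E -> R) (A : set T) (h : T -> E) :
  (forall x y, nE (x + y) <= Num.max (nE x) (nE y)) ->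
  compact A -> ncontinuous nE h -> exists C, forall y, A y -> nE (h y) <= C.
Proof.
move=> ultra cA hc.
suff [M [_ bound_h]] : \forall M \near +oo, A `<=` [set y | nE (h y) <= M].
  by exists (M + 1); apply: bound_h; rewrite ltrDl.
apply: (proj1 (compact_near_coveringP A) cA) => x Ax.
exists ([set y | nE (h y - h x) < 1], [set M | Num.max 1 (nE (h x)) < M]).
  split; first exact: hc.
  by exists (Num.max 1 (nE (h x))); split => //; exact: num_real.
move=> [y M] [/= near_hx gtM].
rewrite -(subrK (h x) (h y)); apply: le_trans (ultra _ _) _.
apply: ltW; apply: le_lt_trans gtM.
by rewrite ge_max !le_max (ltW near_hx) lexx orbT.
Qed.

Section BoundedCoboundary.
Variables (R : realType) (K : fieldType) (absK : K -> R).
Variables (G : topologicalType) (mul : G -> G -> G) (inv : G -> G) (one : G).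
Variables (E : lmodType K) (nE : E -> R) (act : G -> E -> E).
Hypotheses (hK : nonarch_abs absK) (hG : is_topgroup mul inv one).
Hypothesis hE : normed_KG_module absK mul one nE act.
Variables (h : G -> E) (D : R).
Hypothesis delta1_h_le : forall p, nE (delta1 mul act h p) <= D.

Lemma delta1_one_one : h one = delta1 mul act h (one, one).
Proof. by rewrite /delta1 /= (act_one hE) (tg_mul1g hG) subrK. Qed.

Lemma sublevel_is_subgroup (M : R) :
  D <= M -> is_subgroup mul inv one [set x | nE (h x) <= M].
Proof.
move=> DM; have delta1_le_M p := le_trans (delta1_h_le p) DM.
have h1_le_M : nE (h one) <= M by rewrite delta1_one_one.
split; [|split] => [|x y /= hx hy|x /= hx] //=.
- have -> : h (mul x y) = act x (h y) + h x - delta1 mul act h (x, y).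
    by rewrite /delta1 /= opprD addrACA subrr addr0 opprB addrC subrK.
  apply: le_trans (norm_ultraB hK hE _ _) _; rewrite ge_max delta1_le_M andbT.
  by apply: le_trans (norm_ultra hE _ _) _; rewrite ge_max (act_isom hE) hx hy.
- have act_h_inv : act x (h (inv x)) = delta1 mul act h (x, inv x) + h one - h x.
    by rewrite /delta1 /= (tg_mulgV hG) addrAC addrK subrK.
  rewrite -(act_isom hE x) act_h_inv; apply: le_trans (norm_ultraB hK hE _ _) _.
  rewrite ge_max hx andbT; apply: le_trans (norm_ultra hE _ _) _.
  by rewrite ge_max delta1_le_M h1_le_M.
Qed.

Lemma bounded_delta1_nbounded :
  compactly_generated mul inv one -> ncontinuous nE h -> nbounded nE h.
Proof.
move=> [A [cA genA]] hc.
have [C hC] := ncontinuous_bounded_compact (norm_ultra hE) cA hc.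
have sub : is_subgroup mul inv one [set x | nE (h x) <= Num.max C D].
  by apply: sublevel_is_subgroup; rewrite le_max lexx orbT.
exists (Num.max C D) => x.
have /(_ _ sub) : generated mul inv one A x by rewrite genA.
by apply => y /hC /= hy; rewrite le_max hy.
Qed.

End BoundedCoboundary.

Theorem corollary8p8 (R : realType) (K : fieldType) (absK : K -> R)
  (hK : nonarch_abs absK)
  (G : topologicalType) (mul : G -> G -> G) (inv : G -> G) (one : G)
  (hG : is_topgroup mul inv one) (hcg : compactly_generated mul inv one)
  (E : lmodType K) (nE : E -> R) (act : G -> E -> E)
  (hE : normed_KG_module absK mul one nE act) :
  comparison2_injective nE mul act.
Proof.
move=> f1 f2 [_ [[M1 hM1] _]] [_ [[M2 hM2] _]] [h [hc f_eq]].
exists h; split => //; split => //.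
apply: (bounded_delta1_nbounded hK hG hE (D := Num.max M1 M2)) => // p.
rewrite -f_eq; apply: le_trans (norm_ultraB hK hE _ _) _.
by rewrite ge_max !le_max hM1 hM2 orbT.
Qed.
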